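(* Let $I\subset\mathbb{R}$ be an interval, let $a,c,g:I\to\mathbb{R}$ be given functions and $b_1,b_2,c_1,c_2$ real constants. Suppose $\beta,\gamma,\varepsilon$ are differentiable on $I$ with $$\beta'=c\beta,\qquad \gamma'=a\beta^2,\qquad \varepsilon'=-g\beta.$$ If $u(\xi,\tau),v(\xi,\tau)$ solve the coupled Burgers system $$u_\tau=u_{\xi\xi}-b_1uu_\xi-c_1(uv)_\xi,\qquad v_\tau=v_{\xi\xi}-b_2vv_\xi-c_2(uv)_\xi,$$ then $\psi(x,t)=\beta(t)u(\xi,\tau)$, $\varphi(x,t)=\beta(t)v(\xi,\tau)$, with $\xi=\beta(t)x+\varepsilon(t)$, $\tau=\gamma(t)$, solve $$\psi_t=a(t)\psi_{xx}-b_1a(t)\psi\psi_x-c_1a(t)(\psi\varphi)_x+c(t)(\psi+x\psi_x)-g(t)\psi_x,$$ $$\varphi_t=a(t)\varphi_{xx}-b_2a(t)\varphi\varphi_x-c_2a(t)(\psi\varphi)_x+c(t)(\varphi+x\varphi_x)-g(t)\varphi_x.$$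
   Context: All functions are real-valued; primes denote derivatives with respect to $t$. *)

From Stdlib Require Import Reals.
From Coquelicot Require Import Coquelicot.
Open Scope R_scope.

Definition is_interval (I : R -> Prop) : Prop :=
  forall a b x, I a -> I b -> a <= x <= b -> I x.

Definition d1 (f : R -> R -> R) (x t : R) : R := Derive (fun y => f y t) x.
Definition d2 (f : R -> R -> R) (x t : R) : R := Derive (fun s => f x s) t.
Definition d11 (f : R -> R -> R) (x t : R) : R := Derive (fun y => d1 f y t) x.

Definition classical_at (f : R -> R -> R) (x t : R) : Prop :=
  differentiable_pt f x t /\ ex_derive (fun y => d1 f y t) x.

Definition coupled_burgers_at (b1 b2 c1 c2 : R) (u v : R -> R -> R)
    (xi tau : R) : Prop :=
  classical_at u xi tau /\ classical_at v xi tau /\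
  d2 u xi tau = d11 u xi tau - b1 * u xi tau * d1 u xi tau
                 - c1 * d1 (fun y s => u y s * v y s) xi tau /\
  d2 v xi tau = d11 v xi tau - b2 * v xi tau * d1 v xi tau
                 - c2 * d1 (fun y s => u y s * v y s) xi tau.

Definition vc_burgers_at (a c g : R -> R) (b1 b2 c1 c2 : R)
    (psi phi : R -> R -> R) (x t : R) : Prop :=
  ex_derive (fun s => psi x s) t /\ ex_derive (fun s => phi x s) t /\
  ex_derive (fun y => psi y t) x /\ ex_derive (fun y => phi y t) x /\
  ex_derive (fun y => d1 psi y t) x /\ ex_derive (fun y => d1 phi y t) x /\
  ex_derive (fun y => psi y t * phi y t) x /\
  d2 psi x t = a t * d11 psi x t - b1 * a t * psi x t * d1 psi x t
               - c1 * a t * d1 (fun y s => psi y s * phi y s) x t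
               + c t * (psi x t + x * d1 psi x t) - g t * d1 psi x t /\
  d2 phi x t = a t * d11 phi x t - b2 * a t * phi x t * d1 phi x t
               - c2 * a t * d1 (fun y s => psi y s * phi y s) x t
               + c t * (phi x t + x * d1 phi x t) - g t * d1 phi x t.

From Stdlib Require Import Reals.
From Coquelicot Require Import Coquelicot.
Open Scope R_scope.

(* Each x-derivative of psi(x,t) = beta(t) u(beta(t) x + eps(t), gamma(t)) brings out
   a factor beta, so psi_xx, psi psi_x and (psi phi)_x are beta^3 times the corresponding
   terms of u.  By the chain rule
     psi_t = beta' u + beta ((beta' x + eps') u_xi + gamma' u_tau)
           = c (psi + x psi_x) - g psi_x + a beta^3 u_tau,
   and the Burgers equation for u_tau turns the last term into the right-hand side.
   The computation is pointwise in t. *)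

Lemma is_derive_comp_2d (w : R -> R -> R) (f h : R -> R) (s lf lh : R) :
  differentiable_pt w (f s) (h s) ->
  is_derive f s lf -> is_derive h s lh ->
  is_derive (fun s => w (f s) (h s)) s
    (d1 w (f s) (h s) * lf + d2 w (f s) (h s) * lh).
Proof.
  intros [lx [ly Hw]] Hf Hh.
  unfold d1, d2; destruct (differentiable_pt_lim_unique _ _ _ _ _ Hw) as [-> ->].
  apply is_derive_Reals, derivable_pt_lim_comp_2d; [exact Hw | |];
    apply is_derive_Reals; assumption.
Qed.

Lemma ex_derive_d1_of_differentiable_pt (w : R -> R -> R) (x y : R) :
  differentiable_pt w x y -> ex_derive (fun z => w z y) x.
Proof.
  intros Hw; exists (d1 w x y * 1 + d2 w x y * 0).
  exact (is_derive_comp_2d w (fun z => z) (fun _ => y) x 1 0 Hw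
           (is_derive_id x) (is_derive_const y x)).
Qed.

Lemma is_derive_scal_affine (f : R -> R) (k b e y : R) :
  ex_derive f (b * y + e) ->
  is_derive (fun y => k * f (b * y + e)) y (k * b * Derive f (b * y + e)).
Proof.
  intros Hf.
  rewrite Rmult_assoc; apply is_derive_scal.
  apply (is_derive_comp f (fun y => b * y + e)).
  - exact (Derive_correct f _ Hf).
  - auto_derive; [exact I | ring].
Qed.

Section Similarity.

Variables (a c g beta gamma eps : R -> R) (t : R).

Definition similarity (w : R -> R -> R) : R -> R -> R :=
  fun x s => beta s * w (beta s * x + eps s) (gamma s).

Lemma is_derive_similarity_x (w : R -> R -> R) (y : R) :
  ex_derive (fun z => w z (gamma t)) (beta t * y + eps t) ->
  is_derive (fun y => similarity w y t) y
    (beta t ^ 2 * d1 w (beta t * y + eps t) (gamma t)).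
Proof.
  intros Hw.
  replace (beta t ^ 2) with (beta t * beta t) by ring.
  exact (is_derive_scal_affine (fun z => w z (gamma t)) _ _ _ y Hw).
Qed.

Lemma d1_similarity (w : R -> R -> R) (y : R) :
  ex_derive (fun z => w z (gamma t)) (beta t * y + eps t) ->
  d1 (similarity w) y t = beta t ^ 2 * d1 w (beta t * y + eps t) (gamma t).
Proof. intros Hw; exact (is_derive_unique _ _ _ (is_derive_similarity_x w y Hw)). Qed.

Lemma is_derive_d1_similarity (w : R -> R -> R) (x : R) :
  (forall y, ex_derive (fun z => w z (gamma t)) (beta t * y + eps t)) ->
  ex_derive (fun z => d1 w z (gamma t)) (beta t * x + eps t) ->
  is_derive (fun y => d1 (similarity w) y t) x
    (beta t ^ 3 * d11 w (beta t * x + eps t) (gamma t)).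
Proof.
  intros Hw Hd1w.
  apply (is_derive_ext (fun y => beta t ^ 2 * d1 w (beta t * y + eps t) (gamma t))).
  { intros y; symmetry; exact (d1_similarity w y (Hw y)). }
  replace (beta t ^ 3) with (beta t ^ 2 * beta t) by ring.
  exact (is_derive_scal_affine (fun z => d1 w z (gamma t)) _ _ _ x Hd1w).
Qed.

Lemma d11_similarity (w : R -> R -> R) (x : R) :
  (forall y, ex_derive (fun z => w z (gamma t)) (beta t * y + eps t)) ->
  ex_derive (fun z => d1 w z (gamma t)) (beta t * x + eps t) ->
  d11 (similarity w) x t = beta t ^ 3 * d11 w (beta t * x + eps t) (gamma t).
Proof.
  intros Hw Hd1w; exact (is_derive_unique _ _ _ (is_derive_d1_similarity w x Hw Hd1w)).
Qed.

Lemma is_derive_similarity_mult_x (u v : R -> R -> R) (x : R) :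
  ex_derive (fun z => u z (gamma t) * v z (gamma t)) (beta t * x + eps t) ->
  is_derive (fun y => similarity u y t * similarity v y t) x
    (beta t ^ 3 * d1 (fun y s => u y s * v y s) (beta t * x + eps t) (gamma t)).
Proof.
  intros Huv.
  apply (is_derive_ext
           (fun y => beta t ^ 2 * (u (beta t * y + eps t) (gamma t)
                                   * v (beta t * y + eps t) (gamma t)))).
  { intros y; unfold similarity; simpl; ring. }
  replace (beta t ^ 3) with (beta t ^ 2 * beta t) by ring.
  exact (is_derive_scal_affine (fun z => u z (gamma t) * v z (gamma t)) _ _ _ x Huv).
Qed.

Lemma d1_similarity_mult (u v : R -> R -> R) (x : R) :
  ex_derive (fun z => u z (gamma t) * v z (gamma t)) (beta t * x + eps t) ->
  d1 (fun y s => similarity u y s * similarity v y s) x t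
  = beta t ^ 3 * d1 (fun y s => u y s * v y s) (beta t * x + eps t) (gamma t).
Proof. intros Huv; exact (is_derive_unique _ _ _ (is_derive_similarity_mult_x u v x Huv)). Qed.

Hypothesis beta_t : is_derive beta t (c t * beta t).
Hypothesis gamma_t : is_derive gamma t (a t * beta t ^ 2).
Hypothesis eps_t : is_derive eps t (- (g t * beta t)).

Lemma is_derive_similarity_t (w : R -> R -> R) (x : R) :
  differentiable_pt w (beta t * x + eps t) (gamma t) ->
  is_derive (fun s => similarity w x s) t
    (c t * similarity w x t
     + beta t * ((c t * beta t * x - g t * beta t) * d1 w (beta t * x + eps t) (gamma t)
                 + a t * beta t ^ 2 * d2 w (beta t * x + eps t) (gamma t))).
Proof.
  intros Hw.
  assert (xi_t : is_derive (fun s => beta s * x + eps s) t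
                   (c t * beta t * x - g t * beta t)).
  { apply (is_derive_plus (fun s => beta s * x) eps); [| exact eps_t].
    apply (is_derive_ext (fun s => x * beta s)); [intros; simpl; ring |].
    replace (c t * beta t * x) with (x * (c t * beta t)) by ring.
    exact (is_derive_scal _ _ _ _ beta_t). }
  assert (w_t := is_derive_comp_2d w _ gamma t _ _ Hw xi_t gamma_t).
  replace (c t * similarity w x t + _)
    with (c t * beta t * w (beta t * x + eps t) (gamma t)
          + beta t * (d1 w (beta t * x + eps t) (gamma t) * (c t * beta t * x - g t * beta t)
                      + d2 w (beta t * x + eps t) (gamma t) * (a t * beta t ^ 2)))
    by (unfold similarity; ring).
  exact (is_derive_mult _ _ _ _ _ beta_t w_t Rmult_comm).
Qed.

Lemma d2_similarity (w : R -> R -> R) (x : R) :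
  differentiable_pt w (beta t * x + eps t) (gamma t) ->
  d2 (similarity w) x t
  = c t * similarity w x t
    + beta t * ((c t * beta t * x - g t * beta t) * d1 w (beta t * x + eps t) (gamma t)
                + a t * beta t ^ 2 * d2 w (beta t * x + eps t) (gamma t)).
Proof. intros Hw; exact (is_derive_unique _ _ _ (is_derive_similarity_t w x Hw)). Qed.

Lemma similarity_solves_component (w q : R -> R -> R) (bw cw x : R) :
  classical_at w (beta t * x + eps t) (gamma t) ->
  (forall y, ex_derive (fun z => w z (gamma t)) (beta t * y + eps t)) ->
  d2 w (beta t * x + eps t) (gamma t)
  = d11 w (beta t * x + eps t) (gamma t)
    - bw * w (beta t * x + eps t) (gamma t) * d1 w (beta t * x + eps t) (gamma t)
    - cw * d1 q (beta t * x + eps t) (gamma t) ->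
  d2 (similarity w) x t
  = a t * d11 (similarity w) x t
    - bw * a t * similarity w x t * d1 (similarity w) x t
    - cw * a t * (beta t ^ 3 * d1 q (beta t * x + eps t) (gamma t))
    + c t * (similarity w x t + x * d1 (similarity w) x t)
    - g t * d1 (similarity w) x t.
Proof.
  intros [Hw Hd1w] Hex Ew.
  rewrite (d2_similarity w x Hw), (d11_similarity w x Hex Hd1w),
    (d1_similarity w x (Hex x)), Ew.
  unfold similarity; ring.
Qed.

End Similarity.

Theorem theorem5
  (I : R -> Prop) (HI : is_interval I)
  (a c g : R -> R) (b1 b2 c1 c2 : R)
  (beta gamma eps : R -> R)
  (Hbeta : forall t, I t -> is_derive beta t (c t * beta t))
  (Hgamma : forall t, I t -> is_derive gamma t (a t * (beta t) ^ 2))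
  (Heps : forall t, I t -> is_derive eps t (- (g t * beta t)))
  (u v : R -> R -> R)
  (Huv : forall x t, I t ->
     coupled_burgers_at b1 b2 c1 c2 u v (beta t * x + eps t) (gamma t)) :
  forall x t, I t ->
    vc_burgers_at a c g b1 b2 c1 c2
      (fun x t => beta t * u (beta t * x + eps t) (gamma t))
      (fun x t => beta t * v (beta t * x + eps t) (gamma t)) x t.
Proof.
  intros x t Ht.
  change (vc_burgers_at a c g b1 b2 c1 c2
            (similarity beta gamma eps u) (similarity beta gamma eps v) x t).
  pose proof (is_derive_similarity_t a c g beta gamma eps t
                (Hbeta t Ht) (Hgamma t Ht) (Heps t Ht)) as similarity_t.
  pose proof (similarity_solves_component a c g beta gamma eps t
                (Hbeta t Ht) (Hgamma t Ht) (Heps t Ht)) as solves_component.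
  assert (Hexu : forall y, ex_derive (fun z => u z (gamma t)) (beta t * y + eps t))
    by (intros y; apply ex_derive_d1_of_differentiable_pt, (Huv y t Ht)).
  assert (Hexv : forall y, ex_derive (fun z => v z (gamma t)) (beta t * y + eps t))
    by (intros y; apply ex_derive_d1_of_differentiable_pt, (Huv y t Ht)).
  assert (Hexuv : ex_derive (fun z => u z (gamma t) * v z (gamma t)) (beta t * x + eps t))
    by (apply ex_derive_mult; [apply Hexu | apply Hexv]).
  destruct (Huv x t Ht) as [Hu [Hv [Eu Ev]]].
  repeat split.
  - eexists; exact (similarity_t u x (proj1 Hu)).
  - eexists; exact (similarity_t v x (proj1 Hv)).
  - eexists; exact (is_derive_similarity_x beta gamma eps t u x (Hexu x)).
  - eexists; exact (is_derive_similarity_x beta gamma eps t v x (Hexv x)).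
  - eexists; exact (is_derive_d1_similarity beta gamma eps t u x Hexu (proj2 Hu)).
  - eexists; exact (is_derive_d1_similarity beta gamma eps t v x Hexv (proj2 Hv)).
  - eexists; exact (is_derive_similarity_mult_x beta gamma eps t u v x Hexuv).
  - rewrite d1_similarity_mult by exact Hexuv.
    exact (solves_component u _ b1 c1 x Hu Hexu Eu).
  - rewrite d1_similarity_mult by exact Hexuv.
    exact (solves_component v _ b2 c2 x Hv Hexv Ev).
Qed.
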